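(* Let $f(x) \in \mathbb{Z}[x]$ be an irreducible polynomial and let $r \geq 3$ be an odd positive integer. If $F$ is a splitting sequence of $f(x)$ with constant exponent sequence $(r)_{n \in \mathbb{N}}$ such that exactly $T$ terms of its binary string $\mathcal{B}(F)$ equal ``S'', for some $T \in \mathbb{N}$, then the first $T$ terms $\mathcal{B}_1(F), \ldots, \mathcal{B}_T(F)$ of $\mathcal{B}(F)$ are all equal to ``S''.
   Context: Let $f(x)$ be an irreducible polynomial in $\mathbb{Z}[x]$ and let $(e_n)_{n \in \mathbb{N}}$ be a sequence of positive integers (the exponent sequence). A splitting sequence of $f(x)$ with this exponent sequence is a sequence $F = (f_n(x))_{n \in \mathbb{N}_0}$ of irreducible polynomials in $\mathbb{Z}[x]$ with $f_0(x) = f(x)$ and, for each $k \geq 1$, $f_k(x)$ an irreducible divisor in $\mathbb{Z}[x]$ of $f_{k-1}(x^{e_k})$. The binary string $\mathcal{B}(F) = (\mathcal{B}_n(F))_{n \in \mathbb{N}}$ of $F$ is the sequence over the alphabet $\{\text{``L''}, \text{``S''}\}$ with $\mathcal{B}_n(F) = \text{``L''}$ if $f_n(x) = f_{n-1}(x^{e_n})$ (i.e. $f_{n-1}(x^{e_n})$ is itself irreducible and was taken as $f_n$) and $\mathcal{B}_n(F) = \text{``S''}$ otherwise (i.e. $f_{n-1}(x^{e_n})$ is reducible in $\mathbb{Z}[x]$). *)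

From HB Require Import structures.
From mathcomp Require Import all_boot all_order all_algebra.
Set Implicit Arguments. Unset Strict Implicit. Unset Printing Implicit Defensive.
Import Order.TTheory GRing.Theory Num.Theory.
Local Open Scope ring_scope.

Definition irreducibleZx (p : {poly int}) : Prop :=
  p != 0 /\ p \isn't a GRing.unit /\
  forall a b : {poly int}, p = a * b -> a \is a GRing.unit \/ b \is a GRing.unit.

Definition dvdZx (g p : {poly int}) : Prop := exists q : {poly int}, p = g * q.

Definition comp_pow (p : {poly int}) (e : nat) : {poly int} := p \Po 'X^e.

Definition splitting_sequence (f : {poly int}) (e : nat -> nat)
    (F : nat -> {poly int}) : Prop :=
  irreducibleZx f /\ F 0%N = f /\
  (forall k, irreducibleZx (F k)) /\
  (forall k, (1 <= k)%N -> dvdZx (F k) (comp_pow (F k.-1) (e k))).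

(* B_n(F) = "S" (for n >= 1) iff f_{n-1}(x^{e_n}) is reducible. *)
Definition is_S (e : nat -> nat) (F : nat -> {poly int}) (n : nat) : Prop :=
  ~ irreducibleZx (comp_pow (F n.-1) (e n)).

From mathcomp Require Import all_boot all_algebra all_field.
From Stdlib Require Import Classical.
Set Implicit Arguments. Unset Strict Implicit. Unset Printing Implicit Defensive.
Import GRing.Theory Num.Theory.
Local Open Scope ring_scope.

(* Once a step of F is "L", i.e. f_n = +-f_{n-1}(x^r), we get
   f_n(x^r) = +-f_{n-1}(x^(r^2)); so it suffices that, for odd r > 1, the
   irreducibility of g and g(x^r) forces that of g(x^(r^2)). Then "L" is
   followed only by "L", and the T steps equal to "S" are the first T.

   By Gauss's lemma we may work over Q. Let t be a root of g. If X^m - t is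
   irreducible over Q(t), then g(x^m) is irreducible: the roots of an
   irreducible factor A of g(x^m) are stable under y |-> y' whenever
   y'^m = y^m, so A = H(x^m) with g | H. By Capelli's theorem for odd
   exponents, X^(r^2) - t can only be reducible over Q(t) if t = u^p with
   u in Q(t) and p a prime divisor of r; but then a root v of X^(r/p) - u
   is a root of g(x^r) of degree at most (r/p) deg g over Q. Capelli's
   theorem itself goes by induction through X^n - a = (X^p - a)(x^(n/p)),
   norms from K(t) to K (determinants of companion matrices) pushing
   "t is not a q-th power" down to "a is not a q-th power". *)

Lemma irredp_dvdp_common_root (K L : fieldType) (iota : {rmorphism K -> L})
    (Q H : {poly K}) z :
  irreducible_poly Q -> root (map_poly iota Q) z -> root (map_poly iota H) z ->
  Q %| H.
Proof.
move=> [Q_gt1 Q_irr] Qz Hz.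
have Q_neq0 : Q != 0 by rewrite -size_poly_gt0 ltnW.
have g_neq0 : gcdp Q H != 0 by rewrite gcdp_eq0 negb_and Q_neq0.
have gz : root (map_poly iota (gcdp Q H)) z by rewrite gcdp_map root_gcd Qz Hz.
have g_size : size (gcdp Q H) != 1.
  by rewrite -(size_map_poly iota) gtn_eqF // (root_size_gt1 _ gz) // map_poly_eq0.
by rewrite -(eqp_dvdl _ (Q_irr _ g_size (dvdp_gcdl Q H))) dvdp_gcdr.
Qed.

Lemma irredp_separable (K : fieldType) (iota : {rmorphism K -> algC}) (Q : {poly K}) :
  irreducible_poly Q -> separable_poly Q.
Proof.
move=> [Q_gt1 Q_irr]; have Q_neq0 : Q != 0 by rewrite -size_poly_gt0 ltnW.
have dQ_neq0 : Q^`() != 0.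
  have [n Q_size] : exists n, size Q = n.+2.
    by exists (size Q).-2; move: Q_gt1; case: (size Q) => [|[|]].
  apply/eqP => /(congr1 (fun p : {poly K} => p`_n)) /eqP.
  rewrite coef_deriv coef0 -(fmorph_eq0 iota) rmorphMn mulrn_eq0 /= fmorph_eq0.
  by rewrite -[n.+1]/(n.+2.-1) -Q_size -lead_coefE lead_coef_eq0 (negPf Q_neq0).
rewrite unlock /coprimep; apply/negPn/negP => g_size.
have gQ := Q_irr _ g_size (dvdp_gcdl _ _).
have : Q %| Q^`() by rewrite -(eqp_dvdl _ gQ) dvdp_gcdr.
by move/(dvdp_leq dQ_neq0); rewrite leqNgt lt_size_deriv.
Qed.

Lemma exists_irredp_dvdp (K : fieldType) (q : {poly K}) :
  q != 0 -> size q != 1 -> exists2 A, irreducible_poly A & A %| q.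
Proof.
have [n] := ubnP (size q); elim: n q => // n IH q q_lt q_neq0 q_size.
have q_gt1 : (1 < size q)%N.
  by move: q_size; rewrite -size_poly_eq0 in q_neq0; case: (size q) q_neq0 => [|[|]].
have [q_irr | q_red] := classic (irreducible_poly q); first by exists q.
have [d [d_size [dq d_q]]] : exists d : {poly K}, size d != 1 /\ d %| q /\ ~ (d %= q).
  apply: NNPP => no_d; apply: q_red; split => // d d_size dq.
  by apply: NNPP => d_q; apply: no_d; exists d.
have d_neq0 : d != 0 by apply: contraNneq q_neq0 => d0; rewrite -dvd0p -d0.
have d_lt : (size d < size q)%N.
  rewrite ltn_neqAle (dvdp_leq q_neq0 dq) andbT; apply: contra_not_neq d_q => dq_size.
  by rewrite -dvdp_size_eqp // dq_size.
have [A A_irr Ad] := IH d (leq_trans d_lt (ltnSE q_lt)) d_neq0 d_size.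
by exists A => //; apply: dvdp_trans dq.
Qed.

Lemma irredp_from_factor_size (K : fieldType) (p : {poly K}) :
  (1 < size p)%N ->
  (forall A, irreducible_poly A -> A %| p -> (size p <= size A)%N) ->
  irreducible_poly p.
Proof.
move=> p_gt1 p_min; split => // q q_size qp.
have p_neq0 : p != 0 by rewrite -size_poly_gt0 ltnW.
have q_neq0 : q != 0 by apply: contraNneq p_neq0 => q0; rewrite -dvd0p -q0.
have [A A_irr Aq] := exists_irredp_dvdp q_neq0 q_size.
rewrite -dvdp_size_eqp // eqn_leq (dvdp_leq p_neq0 qp).
exact: leq_trans (p_min A A_irr (dvdp_trans Aq qp)) (dvdp_leq q_neq0 Aq).
Qed.

(** * Substituting X^m *)

Lemma size_comp_polyXn (R : idomainType) (p : {poly R}) m :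
  (0 < m)%N -> p != 0 -> size (p \Po 'X^m) = ((size p).-1 * m).+1.
Proof.
move=> m_gt0 p_neq0; have Xm_gt1 : (1 < size ('X^m : {poly R}))%N.
  by rewrite size_polyXn ltnS.
by rewrite -[LHS]prednK ?size_poly_gt0 ?comp_poly_eq0 // size_comp_poly size_polyXn.
Qed.

Lemma root_map_comp_Xn (K L : fieldType) (iota : {rmorphism K -> L}) (p : {poly K}) m x :
  root (map_poly iota (p \Po 'X^m)) x = root (map_poly iota p) (x ^+ m).
Proof. by rewrite map_comp_poly map_polyXn /root horner_comp hornerXn. Qed.

Lemma decimate_comp_polyXn (R : nzRingType) (p : {poly R}) m : (0 < m)%N ->
  (forall j, ~~ (m %| j)%N -> p`_j = 0) ->
  p = (\poly_(i < size p) p`_(i * m)) \Po 'X^m.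
Proof.
move=> m_gt0 p_coef; apply/polyP => i; rewrite coef_comp_poly_Xn //.
have [/dvdnP [k ->] | /p_coef //] := boolP (m %| i)%N.
rewrite mulnK // coef_poly; case: ltnP => // k_ge.
by rewrite nth_default // (leq_trans k_ge) // leq_pmulr.
Qed.

Lemma prim_root_stable_coef_eq0 (G : {poly algC}) (m : nat) (z : algC) :
  m.-primitive_root z -> separable_poly G -> G`_0 != 0 ->
  (forall x, root G x -> root G (z * x)) -> forall j, ~~ (m %| j)%N -> G`_j = 0.
Proof.
move=> z_prim G_sep G0_neq0 G_stable j m_ndvd_j.
have G_neq0 : G != 0 by apply: contraNneq G0_neq0 => ->; rewrite coef0.
pose Gz := \poly_(i < size G) (z ^+ i * G`_i).
have Gz_horner x : Gz.[x] = G.[z * x].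
  rewrite horner_poly horner_coef; apply: eq_bigr => i _.
  by rewrite exprMn [z ^+ i * G`_i]mulrC -mulrA.
have Gz0 : Gz`_0 = G`_0 by rewrite coef_poly size_poly_gt0 G_neq0 expr0 mul1r.
have Gz_neq0 : Gz != 0 by apply: contraNneq G0_neq0 => Gz_eq0; rewrite -Gz0 Gz_eq0 coef0.
have G_dvd_Gz : G %| Gz.
  have [rs G_eq] := closed_field_poly_normal G.
  have lc_neq0 : lead_coef G != 0 by rewrite lead_coef_eq0.
  have rs_uniq : uniq rs.
    by rewrite -separable_prod_XsubC -(eqp_separable (eqp_scale _ lc_neq0)) -G_eq.
  rewrite G_eq dvdpZl //; apply: uniq_roots_dvdp; last by rewrite uniq_rootsE.
  apply/allP => x x_rs; rewrite /root Gz_horner; apply/eqP/rootP; apply: G_stable.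
  by rewrite G_eq rootZ // root_prod_XsubC.
have G_eqp : G %= Gz.
  by rewrite -dvdp_size_eqp // eqn_leq size_poly (dvdp_leq _ G_dvd_Gz).
have G_Gz : G = Gz.
  have [[c1 c2] /andP[c1_neq0 _] /= c12] := eqpP _ _ G_eqp.
  have := congr1 (fun p : {poly algC} => p`_0) c12; rewrite /= !coefZ Gz0 => /mulIf c1c2.
  by apply: (scalerI c1_neq0); rewrite c12 c1c2.
have := congr1 (fun p : {poly algC} => p`_j) G_Gz; rewrite /= coef_poly.
case: ltnP => [_ Gj | j_ge _]; last by rewrite nth_default.
apply/eqP; apply: contraNT m_ndvd_j => Gj_neq0; rewrite (prim_order_dvd z_prim).
by apply/eqP; apply: (mulIf Gj_neq0); rewrite mul1r -Gj.
Qed.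

Section CompXnIrreducible.

Variables (K : fieldType) (iota : {rmorphism K -> algC}) (Q : {poly K}) (m : nat).
Hypotheses (Q_irr : irreducible_poly Q) (m_gt0 : (0 < m)%N) (Q0_neq0 : Q`_0 != 0).
Hypothesis XnsubC_irr : forall t, root (map_poly iota Q) t ->
  irreducible_poly ('X^m - (subfx_root iota t Q)%:P).

Let Q_neq0 : Q != 0. Proof. exact: irredp_neq0. Qed.

Lemma root_dvdp_comp_Xn_stable (A : {poly K}) x y :
  A %| Q \Po 'X^m -> root (map_poly iota A) x -> y ^+ m = x ^+ m ->
  root (map_poly iota A) y.
Proof.
move=> AQ Ax yx; set t := x ^+ m in yx.
have Qt : root (map_poly iota Q) t.
  by rewrite -root_map_comp_Xn (root_dvdp _ Ax) ?dvdp_map.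
pose j := subfx_inj (iota := iota) (z := t) (p := Q).
have j_base (p : {poly K}) : map_poly j (map_poly (inj_subfx iota t Q) p) = map_poly iota p.
  rewrite -map_poly_comp; apply: eq_map_poly => a /=.
  by rewrite /j /inj_subfx /= subfx_inj_eval // map_polyC hornerC.
have j_XnsubC : map_poly j ('X^m - (subfx_root iota t Q)%:P) = 'X^m - t%:P.
  by rewrite rmorphB /= map_polyXn map_polyC /= subfx_inj_root.
have := irredp_dvdp_common_root (iota := j) (z := x)
  (H := map_poly (inj_subfx iota t Q) A) (XnsubC_irr Qt).
rewrite j_XnsubC j_base /root !hornerE subrr eqxx => /(_ isT Ax).
rewrite -(dvdp_map j) j_XnsubC j_base => /root_dvdp; apply.
by rewrite /root !hornerE yx subrr.
Qed.

Lemma irredp_dvdp_comp_Xn_size (A : {poly K}) :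
  irreducible_poly A -> A %| Q \Po 'X^m -> (size (Q \Po 'X^m) <= size A)%N.
Proof.
move=> A_irr AQ; have A_neq0 := irredp_neq0 A_irr.
have Q_root x : root (map_poly iota A) x -> root (map_poly iota Q) (x ^+ m).
  by move=> Ax; rewrite -root_map_comp_Xn (root_dvdp _ Ax) ?dvdp_map.
have [x Ax] : exists x, root (map_poly iota A) x.
  by apply/closed_rootP; rewrite size_map_poly; case: A_irr => /gtn_eqF ->.
have [z z_prim] := C_prim_root_exists m_gt0.
have A0_neq0 : (map_poly iota A)`_0 != 0.
  apply: contra Q0_neq0 => /eqP A0.
  have /Q_root : root (map_poly iota A) 0 by rewrite /root horner_coef0 A0.
  by rewrite expr0n gtn_eqF // /root horner_coef0 coef_map fmorph_eq0.
have A_stable y : root (map_poly iota A) y -> root (map_poly iota A) (z * y).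
  move=> Ay; apply: root_dvdp_comp_Xn_stable AQ Ay _.
  by rewrite exprMn prim_expr_order // mul1r.
have A_sep : separable_poly (map_poly iota A).
  by rewrite separable_map; apply: irredp_separable A_irr.
have A_coef := prim_root_stable_coef_eq0 z_prim A_sep A0_neq0 A_stable.
set H := \poly_(i < size A) A`_(i * m).
have AH : A = H \Po 'X^m.
  apply: decimate_comp_polyXn => // j /A_coef /eqP.
  by rewrite coef_map fmorph_eq0 => /eqP.
have H_neq0 : H != 0 by apply: contraNneq A_neq0 => H0; rewrite AH H0 comp_poly0.
have QH : Q %| H.
  by apply: irredp_dvdp_common_root Q_irr (Q_root x Ax) _; rewrite -root_map_comp_Xn -AH.
rewrite AH !size_comp_polyXn // ltnS leq_mul2r.
by rewrite -!subn1 leq_sub2r ?dvdp_leq ?orbT.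
Qed.

Lemma irredp_comp_Xn : irreducible_poly (Q \Po 'X^m).
Proof.
apply: irredp_from_factor_size => [|A]; last exact: irredp_dvdp_comp_Xn_size.
rewrite size_comp_polyXn // ltnS muln_gt0 m_gt0 andbT -subn1 subn_gt0.
by case: Q_irr.
Qed.

End CompXnIrreducible.

(** * Norms via companion matrices *)

Lemma char_poly_eqp (K : fieldType) (g : {poly K}) : (1 < size g)%N ->
  exists n (C : 'M[K]_n.+1), char_poly C %= g /\ size g = n.+2.
Proof.
move=> g_gt1; have lcV_neq0 : (lead_coef g)^-1 != 0.
  by rewrite invr_eq0 lead_coef_eq0 -size_poly_gt0 ltnW.
set gm := (lead_coef g)^-1 *: g; have gm_size : size gm = size g by rewrite size_scale.
have gm_monic : gm \is monic.
  by rewrite monicE lead_coefZ mulVf // lead_coef_eq0 -size_poly_gt0 ltnW.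
have := companionmxK gm_monic; move: (companionmx gm); rewrite gm_size.
case: (size g) g_gt1 => [|[|n]] // _ C Cgm; exists n, C.
by rewrite Cgm eqp_scale.
Qed.

Lemma detX (R : comNzRingType) n (A : 'M[R]_n.+1) k : \det (A ^+ k) = \det A ^+ k.
Proof. by elim: k => [|k IHk]; rewrite ?det1 // !exprS detM IHk. Qed.

Lemma horner_mx_char_dvdp (K : fieldType) n (C : 'M[K]_n.+1) (f : {poly K}) :
  char_poly C %| f -> horner_mx C f = 0.
Proof. by move=> /dvdpP [q ->]; rewrite rmorphM /= Cayley_Hamilton mulr0. Qed.

(* For char_poly C = g, [\det (horner_mx C h)] is the norm of h(x) from
   K[x]/(g) to K. *)
Lemma norm_dvdp_expB (K : fieldType) n (C : 'M[K]_n.+1) (h w : {poly K}) k :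
  char_poly C %| h ^+ k - w -> \det (horner_mx C h) ^+ k = \det (horner_mx C w).
Proof.
move/horner_mx_char_dvdp/eqP; rewrite rmorphB rmorphXn subr_eq0 => /eqP <-.
by rewrite detX.
Qed.

Lemma norm_dvdp_expBX (K : fieldType) (g h : {poly K}) (k : nat) :
  g \is monic -> (1 < size g)%N -> g %| h ^+ k - 'X ->
  exists c : K, c ^+ k = (-1) ^+ (size g).-1 * g`_0.
Proof.
move=> g_monic g_gt1; have [n [C [Cg ->]]] := char_poly_eqp g_gt1.
move: Cg; rewrite eqp_monic ?char_poly_monic // => /eqP <-.
move/norm_dvdp_expB; rewrite horner_mx_X => norm_h.
by exists (\det (horner_mx C h)); rewrite norm_h char_poly_det signrMK.
Qed.

Lemma norm_dvdp_XnsubC (K : fieldType) (g : {poly K}) (p : nat) (a : K) :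
  (1 < size g)%N -> g %| 'X^p - a%:P -> exists c : K, c ^+ p = a ^+ (size g).-1.
Proof.
move=> g_gt1; have [n [C [Cg ->]]] := char_poly_eqp g_gt1.
rewrite -(eqp_dvdl _ Cg) => /norm_dvdp_expB.
by rewrite horner_mx_X horner_mx_C det_scalar; exists (\det C).
Qed.

Lemma irredp_dvdp_horner_mx (K : fieldType) n (C : 'M[K]_n.+1) (P f : {poly K}) :
  irreducible_poly P -> horner_mx C P = 0 -> horner_mx C f = 0 -> P %| f.
Proof.
move=> [_ P_irr] CP Cf; have mxminpoly_size : size (mxminpoly C) != 1.
  by rewrite size_mxminpoly eqSS -lt0n mxminpoly_nonconstant.
by rewrite -(eqp_dvdl _ (P_irr _ mxminpoly_size (mxminpoly_min CP))) mxminpoly_min.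
Qed.

Lemma horner_mx_comp (K : fieldType) n (C : 'M[K]_n.+1) (f h : {poly K}) :
  horner_mx C (f \Po h) = horner_mx (horner_mx C h) f.
Proof.
rewrite comp_polyE [in RHS](_ : f = \sum_(i < size f) f`_i *: 'X^i); last first.
  by rewrite -poly_def coefK.
rewrite !rmorph_sum /=; apply: eq_bigr => i _.
by rewrite !horner_mxZ !rmorphXn /= horner_mx_X.
Qed.

Lemma irredp_dvdp_char_poly_comp (K : fieldType) (P h : {poly K}) :
  irreducible_poly P -> exists2 chi : {poly K}, size chi = size P & P %| chi \Po h.
Proof.
move=> P_irr; have P_gt1 : (1 < size P)%N by case: P_irr.
have [n [C [CP P_size]]] := char_poly_eqp P_gt1.
exists (char_poly (horner_mx C h)); first by rewrite size_char_poly P_size.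
apply: (irredp_dvdp_horner_mx (C := C) P_irr); last by rewrite horner_mx_comp Cayley_Hamilton.
by apply: horner_mx_char_dvdp; rewrite (eqp_dvdl _ CP).
Qed.

(** * Capelli's theorem for odd exponents *)

Lemma expr_coprime_root (K : fieldType) (a c : K) (p k : nat) :
  (0 < k)%N -> coprime k p -> a != 0 -> c ^+ p = a ^+ k -> exists b, b ^+ p = a.
Proof.
move=> k_gt0 kp a_neq0 ca; have [u v uv _] := egcdnP p k_gt0.
rewrite (eqP kp) in uv.
exists (c ^+ u / a ^+ v); rewrite expr_div_n -!exprM mulnC exprM ca -exprM mulnC uv.
by rewrite exprD expr1 mulrAC divff ?mul1r // expf_neq0.
Qed.

Lemma irredp_XnsubC_prime (K : fieldType) (p : nat) (a : K) :
  prime p -> (forall c : K, c ^+ p != a) -> irreducible_poly ('X^p - a%:P).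
Proof.
move=> p_pr a_npow; have p_gt0 := prime_gt0 p_pr.
have a_neq0 : a != 0 by have := a_npow 0; rewrite expr0n gtn_eqF // eq_sym.
have XnsubC_size : size ('X^p - a%:P) = p.+1 := size_XnsubC _ p_gt0.
have XnsubC_neq0 : 'X^p - a%:P != 0 by rewrite -size_poly_gt0 XnsubC_size.
split => [|q q_size q_dvd]; first by rewrite XnsubC_size ltnS.
have q_neq0 : q != 0 by apply: contraNneq XnsubC_neq0 => q0; rewrite -dvd0p -q0.
have q_gt1 : (1 < size q)%N.
  by case: (size q) q_size (size_poly_gt0 q) => [|[|]] //; rewrite q_neq0.
have [c ca] := norm_dvdp_XnsubC q_gt1 q_dvd.
have q_le : ((size q).-1 <= p)%N.
  by rewrite -ltnS prednK ?(ltnW q_gt1) // -XnsubC_size dvdp_leq.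
rewrite -dvdp_size_eqp // XnsubC_size.
case: (ltngtP (size q).-1 p) q_le => [q_lt _ | // | <- _]; last by rewrite prednK ?(ltnW q_gt1).
have k_gt0 : (0 < (size q).-1)%N by rewrite -ltnS prednK ?(ltnW q_gt1).
have kp : coprime (size q).-1 p by rewrite coprime_sym prime_coprime // gtnNdvd.
have [b ba] := expr_coprime_root k_gt0 kp a_neq0 ca.
by have := a_npow b; rewrite ba eqxx.
Qed.

Lemma subfx_root_expr_norm (K : fieldType) (iota : {rmorphism K -> algC}) (a : K)
    (p q : nat) t (c : subFExtend iota t ('X^p - a%:P)) :
  odd p -> irreducible_poly ('X^p - a%:P) -> root (map_poly iota ('X^p - a%:P)) t ->
  c ^+ q = subfx_root iota t ('X^p - a%:P) -> exists b : K, b ^+ q = a.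
Proof.
move=> p_odd Q_irr Qt; have p_gt0 := odd_gt0 p_odd.
have Q_neq0 := irredp_neq0 Q_irr.
have [h ->] := subfxE c; rewrite -rmorphXn => /(congr1 subfx_inj).
rewrite !subfx_inj_eval // map_polyX hornerX => htq.
have Q_dvd : 'X^p - a%:P %| h ^+ q - 'X.
  apply: irredp_dvdp_common_root Q_irr Qt _.
  by rewrite /root rmorphB /= map_polyX hornerD hornerN hornerX htq subrr.
have Q_monic : 'X^p - a%:P \is monic by rewrite monicXnsubC.
have [|b] := norm_dvdp_expBX Q_monic _ Q_dvd; first by rewrite size_XnsubC.
(* The norm of t is (-1)^p (-a) = a because p is odd. *)
rewrite size_XnsubC //= coefB coefXn coefC eqxx [0 == p]eq_sym gtn_eqF // sub0r.
by rewrite -signr_odd p_odd expr1 mulN1r opprK; exists b.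
Qed.

Theorem Capelli_odd (K : fieldType) (iota : {rmorphism K -> algC}) (a : K) (n : nat) :
  odd n -> (forall p (c : K), prime p -> (p %| n)%N -> c ^+ p != a) ->
  irreducible_poly ('X^n - a%:P).
Proof.
elim/ltn_ind: n K iota a => n IH K iota a n_odd a_npow.
have [n_le1 | n_gt1] := leqP n 1.
  have -> : n = 1%N by apply/eqP; rewrite eqn_leq n_le1 odd_gt0.
  by rewrite expr1; apply: irredp_XsubC.
pose p := pdiv n; have p_pr : prime p := pdiv_prime n_gt1.
have p_dvd : (p %| n)%N := pdiv_dvd n.
pose m := (n %/ p)%N; have n_eq : n = (m * p)%N by rewrite divnK.
have [m_odd p_odd] : odd m /\ odd p by apply/andP; rewrite -oddM -n_eq.
have m_lt : (m < n)%N by rewrite ltn_Pdiv // ?prime_gt1 // ltnW.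
have a_neq0 : a != 0.
  by have := a_npow p 0 p_pr p_dvd; rewrite expr0n gtn_eqF ?prime_gt0 // eq_sym.
have Q_irr := irredp_XnsubC_prime p_pr (fun c => a_npow p c p_pr p_dvd).
have -> : 'X^n - a%:P = ('X^p - a%:P) \Po 'X^m.
  by rewrite comp_polyB comp_polyC comp_Xn_poly -exprM -n_eq.
apply: (irredp_comp_Xn (iota := iota)) => //; first exact: odd_gt0.
  rewrite coefB coefXn coefC eqxx [0 == p]eq_sym gtn_eqF ?prime_gt0 //.
  by rewrite sub0r oppr_eq0.
move=> t Qt; apply: (IH _ m_lt _ subfx_inj) => // q c q_pr q_dvd; apply/eqP => cq.
have [b bq] := subfx_root_expr_norm p_odd Q_irr Qt cq.
have q_dvd_n : (q %| n)%N by rewrite n_eq dvdn_mulr.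
by have := a_npow q b q_pr q_dvd_n; rewrite bq eqxx.
Qed.

(** * From X^r to X^(r^2) *)

Lemma subfx_root_not_expr (K : fieldType) (iota : {rmorphism K -> algC}) (P : {poly K})
    (r p : nat) t (c : subFExtend iota t P) :
  irreducible_poly P -> irreducible_poly (P \Po 'X^r) -> (0 < r)%N -> prime p ->
  (p %| r)%N -> root (map_poly iota P) t -> c ^+ p != subfx_root iota t P.
Proof.
move=> P_irr PXr_irr r_gt0 p_pr p_dvd Pt; apply/negP => /eqP.
have P_neq0 := irredp_neq0 P_irr.
have [h ->] := subfxE c; rewrite -rmorphXn => /(congr1 subfx_inj).
rewrite !subfx_inj_eval // map_polyX hornerX rmorphXn horner_exp.
set u := (map_poly iota h).[t] => up.
pose s := (r %/ p)%N; have r_eq : r = (s * p)%N by rewrite divnK.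
have s_gt0 : (0 < s)%N by rewrite divn_gt0 ?prime_gt0 // dvdn_leq.
have s_lt : (s < r)%N by rewrite ltn_Pdiv // prime_gt1.
(* A root v of X^s - u is a root of P(X^r), and of chi(X^s) where chi(u) = 0
   and deg chi = deg P: too small a degree for a multiple of P(X^r). *)
have [chi chi_size P_dvd] := irredp_dvdp_char_poly_comp h P_irr.
have chi_u : root (map_poly iota chi) u.
  have Pi_dvd : map_poly iota P %| map_poly iota (chi \Po h) by rewrite dvdp_map.
  by have := root_dvdp Pi_dvd Pt; rewrite map_comp_poly /root horner_comp.
have [v vu] : exists v, v ^+ s = u.
  have [v] : exists v, root ('X^s - u%:P) v.
    by apply/closed_rootP; rewrite size_XnsubC // gtn_eqF.
  by rewrite /root !hornerE subr_eq0 => /eqP; exists v.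
have PXr_v : root (map_poly iota (P \Po 'X^r)) v.
  by rewrite root_map_comp_Xn r_eq exprM vu up.
have chiXs_v : root (map_poly iota (chi \Po 'X^s)) v by rewrite root_map_comp_Xn vu.
have chi_neq0 : chi != 0 by rewrite -size_poly_gt0 chi_size size_poly_gt0.
have := dvdp_leq _ (irredp_dvdp_common_root PXr_irr PXr_v chiXs_v).
rewrite -size_poly_gt0 !size_comp_polyXn // chi_size => /(_ isT).
rewrite ltnS leq_mul2l leqNgt s_lt orbF -subn1 subn_eq0 leqNgt.
by case: P_irr => ->.
Qed.

Lemma irredp_comp_Xn_coef0 (K : fieldType) (P : {poly K}) (r : nat) :
  (1 < r)%N -> irreducible_poly (P \Po 'X^r) -> P`_0 != 0.
Proof.
move=> r_gt1 [_ PXr_irr]; apply/negP => /eqP P0.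
have /factor_theorem [q] : root P 0 by rewrite /root horner_coef0 P0.
rewrite subr0 => P_eq; rewrite P_eq comp_polyM comp_polyX in PXr_irr.
have X_size : size ('X : {poly K}) != 1 by rewrite size_polyX.
have X_eqp := PXr_irr 'X X_size (dvdp_mull _ (dvdp_exp (ltnW r_gt1) (dvdpp 'X))).
have := dvdp_leq _ (dvdp_mull (q \Po 'X^r) (dvdpp ('X^r : {poly K}))).
rewrite -size_poly_gt0 -(eqp_size X_eqp) size_polyX size_polyXn ltnS => /(_ isT).
by rewrite ltnNge r_gt1.
Qed.

Theorem irredp_comp_Xn_square (K : fieldType) (iota : {rmorphism K -> algC})
    (P : {poly K}) (r : nat) :
  odd r -> (1 < r)%N -> irreducible_poly P -> irreducible_poly (P \Po 'X^r) ->
  irreducible_poly (P \Po 'X^(r * r)).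
Proof.
move=> r_odd r_gt1 P_irr PXr_irr; have r_gt0 := ltnW r_gt1.
apply: (irredp_comp_Xn (iota := iota)) => //; first by rewrite muln_gt0 r_gt0.
  exact: irredp_comp_Xn_coef0 r_gt1 PXr_irr.
move=> t Pt; apply: (Capelli_odd subfx_inj); first by rewrite oddM r_odd.
move=> p c p_pr; rewrite Euclid_dvdM // orbb => p_dvd.
exact: subfx_root_not_expr c P_irr PXr_irr r_gt0 p_pr p_dvd Pt.
Qed.

(** * Irreducibility in Z[x] *)

Lemma irreducibleZx_irredp (P : {poly int}) :
  irreducibleZx P -> (1 < size P)%N -> irreducible_poly P.
Proof.
move=> [P_neq0 [_ P_irr]] P_gt1; split => // q q_size qP.
have q_neq0 : q != 0 by apply: contraNneq P_neq0 => q0; rewrite -dvd0p -q0.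
have [a P_eq] := dvdpP_int qP.
have [q_unit | a_unit] := P_irr _ _ P_eq.
  by move: q_unit; rewrite poly_unitE size_zprimitive (negPf q_size).
have a_size : (size a <= 1)%N by move: a_unit; rewrite poly_unitE => /andP [/eqP -> _].
have a0_neq0 : a`_0 != 0.
  by apply: contraTneq a_unit => a0; rewrite poly_unitE a0 unitr0 andbF.
apply: eqp_trans (_ : q %= zprimitive q) _.
  by rewrite {1}[q]zpolyEprim eqp_scale // zcontents_eq0.
by rewrite P_eq (size1_polyC a_size) mulrC mul_polyC eqp_sym eqp_scale.
Qed.

Lemma comp_polyXn_mulC (R : comNzRingType) (P a : {poly R}) (c : R) (k : nat) :
  (0 < k)%N -> P \Po 'X^k = a * c%:P -> exists b, P = b * c%:P.
Proof.
move=> k_gt0 PXk_eq; exists (\poly_(i < size P) a`_(i * k)).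
apply/polyP => i; rewrite coefMC coef_poly.
case: ltnP => [_ | i_ge]; last by rewrite mul0r nth_default.
have := congr1 (fun p : {poly R} => p`_(i * k)) PXk_eq.
by rewrite /= coef_comp_poly_Xn // dvdn_mull // mulnK // coefMC.
Qed.

Lemma irreducibleZx_comp_Xn_const_unit (P a : {poly int}) (c : int) (k : nat) :
  (0 < k)%N -> irreducibleZx P -> (1 < size P)%N ->
  P \Po 'X^k = a * c%:P -> c \is a GRing.unit.
Proof.
move=> k_gt0 [_ [_ P_irr]] P_gt1 /(comp_polyXn_mulC k_gt0) [b P_eq].
have [b_unit | ] := P_irr _ _ P_eq; last by rewrite poly_unitE coefC eqxx => /andP [].
have b_size : (size b <= 1)%N by move: b_unit; rewrite poly_unitE => /andP [/eqP -> _].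
move: P_gt1; rewrite P_eq (size1_polyC b_size) -polyCM size_polyC.
by case: (_ != 0).
Qed.

Lemma irreducibleZx_comp_Xn (P : {poly int}) (k : nat) :
  (0 < k)%N -> irreducibleZx P -> (1 < size P)%N ->
  irreducible_poly (P \Po 'X^k) -> irreducibleZx (P \Po 'X^k).
Proof.
move=> k_gt0 P_irrZ P_gt1 [PXk_gt1 PXk_irr].
have PXk_neq0 : P \Po 'X^k != 0 by rewrite -size_poly_gt0 ltnW.
have polyC_unit (c : int) : c \is a GRing.unit -> c%:P \is a GRing.unit.
  move=> c_unit; have c_neq0 : c != 0 by apply: contraTneq c_unit => ->; rewrite unitr0.
  by rewrite poly_unitE size_polyC c_neq0 coefC eqxx c_unit.
split => //; split.
  by rewrite poly_unitE negb_and (gtn_eqF PXk_gt1).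
move=> a b PXk_eq.
have [a_size | a_size] := eqVneq (size a) 1.
  left; rewrite (size1_polyC (eq_leq a_size)); apply: polyC_unit.
  by apply: (irreducibleZx_comp_Xn_const_unit (a := b) k_gt0 P_irrZ P_gt1);
    rewrite PXk_eq mulrC {1}(size1_polyC (eq_leq a_size)).
have b_size : size b = 1.
  have a_dvd : a %| P \Po 'X^k by rewrite PXk_eq dvdp_mulIl.
  have [a_neq0 b_neq0] : a != 0 /\ b != 0 by apply/norP; rewrite -mulf_eq0 -PXk_eq.
  have := eqp_size (PXk_irr a a_size a_dvd).
  rewrite PXk_eq size_mul // (polySpred b_neq0) addnS /= => /eqP.
  by rewrite -{1}[size a]addn0 eqn_add2l => /eqP <-.
right; rewrite (size1_polyC (eq_leq b_size)); apply: polyC_unit.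
apply: (irreducibleZx_comp_Xn_const_unit (a := a) k_gt0 P_irrZ P_gt1).
by rewrite PXk_eq {1}(size1_polyC (eq_leq b_size)).
Qed.

Lemma irreducibleZx_comp_pow_odd (P : {poly int}) (r : nat) : odd r -> (1 < r)%N ->
  irreducibleZx P -> irreducibleZx (comp_pow P r) ->
  irreducibleZx (comp_pow (comp_pow P r) r).
Proof.
move=> r_odd r_gt1 P_irrZ PXr_irrZ; have r_gt0 := ltnW r_gt1.
rewrite /comp_pow -comp_polyA comp_Xn_poly -exprM.
have [P_le1 | P_gt1] := leqP (size P) 1.
  by rewrite (size1_polyC P_le1) comp_polyC -(size1_polyC P_le1).
have P_neq0 : P != 0 by rewrite -size_poly_gt0 ltnW.
apply: irreducibleZx_comp_Xn; rewrite ?muln_gt0 ?r_gt0 //.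
apply/irreducible_rat_int; rewrite map_comp_poly map_polyXn.
apply: (irredp_comp_Xn_square ratr) => //.
  exact/irreducible_rat_int/irreducibleZx_irredp.
have PXr_gt1 : (1 < size (P \Po 'X^r))%N.
  by rewrite size_comp_polyXn // ltnS muln_gt0 r_gt0 andbT -subn1 subn_gt0.
have /irreducible_rat_int := irreducibleZx_irredp PXr_irrZ PXr_gt1.
by rewrite map_comp_poly map_polyXn.
Qed.

Lemma irreducibleZx_mulr_unit (p u : {poly int}) :
  irreducibleZx p -> u \is a GRing.unit -> irreducibleZx (p * u).
Proof.
move=> [p_neq0 [p_nunit p_irr]] u_unit.
have u_neq0 : u != 0 by apply: contraTneq u_unit => ->; rewrite unitr0.
split; first by rewrite mulf_neq0.
split; first by rewrite unitrMl.
move=> a b pu_eq; have p_eq : p = a * (b * u^-1) by rewrite mulrA -pu_eq mulrK.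
have [a_unit | buV_unit] := p_irr _ _ p_eq; [by left | right].
by move: buV_unit; rewrite unitrMl // unitrV.
Qed.

Lemma irreducibleZx_comp_pow_succ (f : {poly int}) (r : nat) (F : nat -> {poly int}) n :
  splitting_sequence f (fun _ => r) F -> odd r -> (1 < r)%N -> (1 <= n)%N ->
  irreducibleZx (comp_pow (F n.-1) r) -> irreducibleZx (comp_pow (F n) r).
Proof.
move=> [_ [_ [F_irr F_dvd]]] r_odd r_gt1 n_ge1 FXr_irr.
have [q FXr_eq] := F_dvd n n_ge1.
have q_unit : q \is a GRing.unit.
  have [_ [_ FXr_fact]] := FXr_irr; have [_ [F_nunit _]] := F_irr n.
  by case: (FXr_fact _ _ FXr_eq) => // F_unit; rewrite F_unit in F_nunit.
have qV_unit : q^-1 \is a GRing.unit by rewrite unitrV.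
have qV_size : (size q^-1 <= 1)%N.
  by move: qV_unit; rewrite poly_unitE => /andP [/eqP -> _].
have -> : F n = comp_pow (F n.-1) r * q^-1 by rewrite FXr_eq mulrK.
rewrite {1}/comp_pow comp_polyM (size1_polyC qV_size) comp_polyC -(size1_polyC qV_size).
apply: irreducibleZx_mulr_unit qV_unit.
exact: irreducibleZx_comp_pow_odd.
Qed.

Lemma is_S_leq (f : {poly int}) (r : nat) (F : nat -> {poly int}) (m n : nat) :
  splitting_sequence f (fun _ => r) F -> odd r -> (1 < r)%N -> (1 <= m <= n)%N ->
  is_S (fun _ => r) F n -> is_S (fun _ => r) F m.
Proof.
move=> F_split r_odd r_gt1 /andP [m_ge1 le_mn] Sn FXr_irr; apply: Sn.
elim: n le_mn => [|n IH]; first by rewrite leqn0 => /eqP m0; rewrite m0 in m_ge1.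
rewrite leq_eqVlt => /orP [/eqP <- // | lt_mn].
apply: (irreducibleZx_comp_pow_succ F_split) => //; last exact: IH.
exact: leq_trans m_ge1 lt_mn.
Qed.

Theorem corollary4p2 (f : {poly int}) (r : nat) (F : nat -> {poly int}) (T : nat) :
  irreducibleZx f -> odd r -> (3 <= r)%N ->
  splitting_sequence f (fun _ => r) F ->
  (exists s : seq nat, uniq s /\ size s = T /\
     (forall n : nat, n \in s <-> ((1 <= n)%N /\ is_S (fun _ => r) F n))) ->
  forall n : nat, (1 <= n)%N -> (n <= T)%N -> is_S (fun _ => r) F n.
Proof.
move=> _ r_odd r_ge3 F_split [s [s_uniq [<- s_S]]] n n_ge1 n_le Fn_irr.
have r_gt1 : (1 < r)%N by apply: leq_trans r_ge3.
have s_sub : {subset s <= iota 1 n.-1}.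
  move=> x /s_S [x_ge1 Sx]; rewrite mem_iota x_ge1 add1n prednK // ltnNge.
  apply/negP => le_nx; apply: (is_S_leq F_split r_odd r_gt1 _ Sx Fn_irr).
  by rewrite n_ge1 le_nx.
have := leq_trans n_le (uniq_leq_size s_uniq s_sub).
by rewrite size_iota leqNgt ltn_predL n_ge1.
Qed.
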